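(* Let $D$ be a pv-monoid (idempotent, with symmetric valuation function) that is right-$\oplus$-distributive, $P$ a nonempty finite set of ports, and $\zeta,\zeta_1,\zeta_2\in PCL(D,P)$. Then $(\zeta_1\oplus\zeta_2)\uplus\zeta\equiv(\zeta_1\uplus\zeta)\oplus(\zeta_2\uplus\zeta)$.
   Context: A valuation monoid $(D,\oplus,\mathrm{val},0)$ consists of a commutative monoid $(D,\oplus,0)$ and a map $\mathrm{val}:D^+\to D$ ($D^+$ = nonempty finite sequences over $D$) with $\mathrm{val}(d)=d$ and $\mathrm{val}(d_1,\dots,d_n)=0$ whenever some $d_i=0$. A pv-monoid $(D,\oplus,\mathrm{val},\otimes,0,1)$ is a valuation monoid with a binary operation $\otimes$ and an element $1$ such that $\mathrm{val}(1,\dots,1)=1$ for any $n\ge1$ arguments, $0\otimes d=d\otimes0=0$, $1\otimes d=d\otimes1=d$. Standing assumption: $D$ is idempotent and $\mathrm{val}$ is symmetric. $D$ is right-$\oplus$-distributive if $(d_1\oplus d_2)\otimes d=(d_1\otimes d)\oplus(d_2\otimes d)$ for all $d,d_1,d_2$. $I(P)$ is the set of nonempty subsets of $P$, $C(P)$ the set of nonempty subsets of $I(P)$. PIL formulas: $\phi::=true\mid p\mid\overline{\phi}\mid\phi\vee\phi$ ($p\in P$), $\alpha\models_i p$ iff $p\in\alpha$, other connectives as usual. PCL formulas: $f::=true\mid\phi\mid\neg f\mid f\sqcup f\mid f+f$; $\gamma\models\phi$ iff every $\alpha\in\gamma$ satisfies $\phi$; $\neg,\sqcup$ are complement and union; $\gamma\models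 f_1+f_2$ iff $\gamma=\gamma_1\cup\gamma_2$ with $\gamma_1,\gamma_2\in C(P)$, $\gamma_1\models f_1,\gamma_2\models f_2$. w$_{\text{pvm}}$PCL formulas ($PCL(D,P)$): $\zeta::=d\mid f\mid\zeta\oplus\zeta\mid\zeta\otimes\zeta\mid\zeta\uplus\zeta\mid *\zeta$; semantics $\|\zeta\|:C(P)\to D$: $\|d\|(\gamma)=d$; $\|f\|(\gamma)\in\{0,1\}$ is $1$ iff $\gamma\models f$; $\oplus,\otimes$ pointwise; $\|\zeta_1\uplus\zeta_2\|(\gamma)=\bigoplus(\|\zeta_1\|(\gamma_1)\otimes\|\zeta_2\|(\gamma_2))$ over disjoint $\gamma_1,\gamma_2\in C(P)$ with union $\gamma$; $\|*\zeta\|(\gamma)=\bigoplus_{n>0}\bigoplus\mathrm{val}(\|\zeta\|(\gamma_1),\dots,\|\zeta\|(\gamma_n))$ over pairwise disjoint $\gamma_1,\dots,\gamma_n\in C(P)$ with union $\gamma$. $\equiv$ means equality of semantics on all of $C(P)$. An empty $\oplus$-sum is $0$. *)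

From Stdlib Require List Permutation.
From mathcomp Require Import all_boot.
Set Implicit Arguments. Unset Strict Implicit. Unset Printing Implicit Defensive.

(* val is given on all of seq D; only its values on nonempty sequences
   (D^+) are meaningful and constrained. *)
Record pvMonoid := PvMonoid {
  car :> Type;
  padd : car -> car -> car;
  pmul : car -> car -> car;
  pval : seq car -> car;
  pzero : car;
  pone : car;
  paddA : forall a b c, padd a (padd b c) = padd (padd a b) c;
  paddC : forall a b, padd a b = padd b a;
  padd0 : forall a, padd pzero a = a;
  pval1 : forall d, pval [:: d] = d;
  pval0 : forall s, s <> [::] -> List.In pzero s -> pval s = pzero;
  pval_one : forall n, pval (nseq n.+1 pone) = pone;
  pmul0l : forall d, pmul pzero d = pzero;
  pmul0r : forall d, pmul d pzero = pzero;
  pmul1l : forall d, pmul pone d = d;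
  pmul1r : forall d, pmul d pone = d
}.

Definition pv_idempotent (D : pvMonoid) : Prop := forall d : D, padd d d = d.
Definition pv_val_symmetric (D : pvMonoid) : Prop :=
  forall s t : seq D, s <> [::] -> Permutation.Permutation s t -> pval s = pval t.
Definition right_oplus_distributive (D : pvMonoid) : Prop :=
  forall d d1 d2 : D, pmul (padd d1 d2) d = padd (pmul d1 d) (pmul d2 d).

Definition bsum (D : pvMonoid) (T : finType) (p : pred T) (F : T -> D) : D :=
  foldr (@padd D) (@pzero D) [seq F x | x <- enum p].

(* I(P) = nonempty subsets of P; C(P) = nonempty sets of elements of I(P).
   We represent elements of C(P) as {set {set P}} satisfying isC. *)
Definition isC (P : finType) (g : {set {set P}}) : bool :=
  (g != set0) && [forall a in g, a != set0].

Inductive PIL (P : finType) : Type :=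
| PIL_true : PIL P
| PIL_port : P -> PIL P
| PIL_neg : PIL P -> PIL P
| PIL_or : PIL P -> PIL P -> PIL P.

Fixpoint PIL_sat (P : finType) (a : {set P}) (phi : PIL P) : bool :=
  match phi with
  | PIL_true => true
  | PIL_port p => p \in a
  | PIL_neg phi' => ~~ PIL_sat a phi'
  | PIL_or phi1 phi2 => PIL_sat a phi1 || PIL_sat a phi2
  end.

Inductive PCL (P : finType) : Type :=
| PCL_true : PCL P
| PCL_pil : PIL P -> PCL P
| PCL_neg : PCL P -> PCL P
| PCL_sqcup : PCL P -> PCL P -> PCL P
| PCL_plus : PCL P -> PCL P -> PCL P.

Fixpoint PCL_sat (P : finType) (g : {set {set P}}) (f : PCL P) : bool :=
  match f with
  | PCL_true => true
  | PCL_pil phi => [forall a in g, PIL_sat a phi]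
  | PCL_neg f' => ~~ PCL_sat g f'
  | PCL_sqcup f1 f2 => PCL_sat g f1 || PCL_sat g f2
  | PCL_plus f1 f2 =>
      [exists g1 : {set {set P}}, exists g2 : {set {set P}},
         [&& isC g1, isC g2, g == g1 :|: g2, PCL_sat g1 f1 & PCL_sat g2 f2]]
  end.

Inductive wPCL (D : pvMonoid) (P : finType) : Type :=
| W_const : D -> wPCL D P
| W_pcl : PCL P -> wPCL D P
| W_oplus : wPCL D P -> wPCL D P -> wPCL D P
| W_otimes : wPCL D P -> wPCL D P -> wPCL D P
| W_uplus : wPCL D P -> wPCL D P -> wPCL D P
| W_star : wPCL D P -> wPCL D P.

Definition uplus_sem (D : pvMonoid) (P : finType)
    (F1 F2 : {set {set P}} -> D) (g : {set {set P}}) : D :=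
  bsum (fun gg : {set {set P}} * {set {set P}} =>
          [&& isC gg.1, isC gg.2, [disjoint gg.1 & gg.2] & gg.1 :|: gg.2 == g])
       (fun gg => pmul (F1 gg.1) (F2 gg.2)).

(* The (+) over n > 0 is
   truncated at n = #|g|: for n > #|g| there is no family of n pairwise
   disjoint nonempty g_i, so those terms are empty sums, i.e. 0. *)
Definition star_sem (D : pvMonoid) (P : finType)
    (F : {set {set P}} -> D) (g : {set {set P}}) : D :=
  foldr (@padd D) (@pzero D)
    [seq bsum (fun f : {ffun 'I_n -> {set {set P}}} =>
                 [&& [forall i, isC (f i)],
                     [forall i, forall j, (i != j) ==> [disjoint f i & f j]] &
                     \bigcup_i f i == g])
              (fun f => pval [seq F (f i) | i <- enum 'I_n])
    | n <- iota 1 #|g| ].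

Fixpoint wsem (D : pvMonoid) (P : finType) (z : wPCL D P)
    : {set {set P}} -> D :=
  match z with
  | W_const d => fun _ => d
  | W_pcl f => fun g => if PCL_sat g f then pone D else pzero D
  | W_oplus z1 z2 => fun g => padd (wsem z1 g) (wsem z2 g)
  | W_otimes z1 z2 => fun g => pmul (wsem z1 g) (wsem z2 g)
  | W_uplus z1 z2 => uplus_sem (wsem z1) (wsem z2)
  | W_star z' => star_sem (wsem z')
  end.

Definition wequiv (D : pvMonoid) (P : finType) (z1 z2 : wPCL D P) : Prop :=
  forall g : {set {set P}}, isC g -> wsem z1 g = wsem z2 g.

From mathcomp Require Import all_boot.

(* Right distributivity pulls the (+) in the left argument of the split
   product out of every summand of the finite sum defining it, and
   the sum of pointwise (+)s then splits by associativity and commutativity. *)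

Section PvMonoidSums.

Variable D : pvMonoid.

Lemma bsumD (T : finType) (p : pred T) (F G : T -> D) :
  bsum p (fun x => padd (F x) (G x)) = padd (bsum p F) (bsum p G).
Proof.
rewrite /bsum; elim: (enum p) => [|x s IH] /=; first by rewrite padd0.
rewrite IH !paddA; congr (padd _ _).
by rewrite -!paddA [padd (G x) _]paddC.
Qed.

Hypothesis Hdist : right_oplus_distributive D.

Lemma uplus_semDl (P : finType) (F1 F2 F : {set {set P}} -> D) :
  uplus_sem (fun g => padd (F1 g) (F2 g)) F
  =1 (fun g => padd (uplus_sem F1 F g) (uplus_sem F2 F g)).
Proof.
move=> g; rewrite /uplus_sem -bsumD /bsum.
by congr foldr; apply: eq_map => gg; apply: Hdist.
Qed.

End PvMonoidSums.

Theorem mainTheorem7 (D : pvMonoid) (P : finType)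
    (Hidem : pv_idempotent D) (Hsym : pv_val_symmetric D)
    (Hdist : right_oplus_distributive D) (HP : 0 < #|P|)
    (z z1 z2 : wPCL D P) :
  wequiv (W_uplus (W_oplus z1 z2) z)
         (W_oplus (W_uplus z1 z) (W_uplus z2 z)).
Proof. by move=> g _; exact: uplus_semDl. Qed.
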